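(* Let $V$ be a finite-dimensional real vector space with filtration $V=V_1\supseteq\cdots\supseteq V_r\supseteq V_{r+1}=\{0\}$, and let $V=\bigoplus_{i=1}^r m_i$ and $V=\bigoplus_{i=1}^r m_i'$ be two decompositions with $V_i=m_i\oplus V_{i+1}=m_i'\oplus V_{i+1}$ for each $i$, with associated dilation groups $(\delta_t)_{t>0}$ and $(\delta_t')_{t>0}$. Let $\phi:V\to V$ be the linear isomorphism whose restriction to each $m_i$ is the projection of $m_i$ onto $m_i'$ along $V_{i+1}$ (so that $\delta'_t=\phi\circ\delta_t\circ\phi^{-1}$). If $|\cdot|'$ is a quasi-norm homogeneous with respect to $(\delta'_t)$, then there is a unique quasi-norm $|\cdot|$ homogeneous with respect to $(\delta_t)$ such that $|x|-|x|'=o(|x|)$ as $|x|\to\infty$; moreover $|x|=|\phi(x)|'$.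
   Context: The dilation group associated to a decomposition $V=\bigoplus m_i$ with $V_i=m_i\oplus V_{i+1}$ is the one-parameter group of linear maps with $\delta_t(x)=t^ix$ for $x\in m_i$. A (homogeneous) quasi-norm associated to $(\delta_t)$ is a continuous function $|\cdot|:V\to[0,\infty)$ such that $|x|=0$ iff $x=0$, and $|\delta_t(x)|=t|x|$ for all $t>0$, $x\in V$. *)

From HB Require Import structures.
From mathcomp Require Import all_boot all_order all_algebra.
From mathcomp Require Import all_classical all_reals all_analysis.
Set Implicit Arguments. Unset Strict Implicit. Unset Printing Implicit Defensive.
Import Order.TTheory GRing.Theory Num.Theory.
Import numFieldNormedType.Exports.
Local Open Scope ring_scope.

Definition adapted_decomp (R : realType) (n r : nat)
  (F m : nat -> {vspace 'rV[R]_n}) : Prop :=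
  [/\ F 1%N = fullv, F r.+1 = 0%VS &
      forall i, (1 <= i <= r)%N ->
        (m i + F i.+1)%VS = F i /\ (m i :&: F i.+1)%VS = 0%VS].

Definition is_dilation (R : realType) (n r : nat)
  (m : nat -> {vspace 'rV[R]_n}) (delta : R -> 'rV[R]_n -> 'rV[R]_n) : Prop :=
  forall t, 0 < t ->
    (forall (a : R) x y, delta t (a *: x + y) = a *: delta t x + delta t y) /\
    (forall i x, (1 <= i <= r)%N -> x \in m i -> delta t x = t ^+ i *: x).

Definition quasi_norm (R : realType) (n : nat)
  (delta : R -> 'rV[R]_n -> 'rV[R]_n) (N : 'rV[R]_n -> R) : Prop :=
  [/\ continuous (N : 'rV[R]_n -> R),
      forall x, 0 <= N x,
      forall x, N x = 0 <-> x = 0 &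
      forall t x, 0 < t -> N (delta t x) = t * N x].

Definition little_o_at_infty (R : realType) (n : nat) (N N' : 'rV[R]_n -> R) : Prop :=
  forall eps : R, 0 < eps -> exists M : R, forall x,
    M < N x -> `|N x - N' x| <= eps * N x.

From HB Require Import structures.
From mathcomp Require Import all_boot all_order all_algebra.
From mathcomp Require Import all_classical all_reals all_analysis.
From mathcomp Require Import zify ring lra.
Import Order.TTheory GRing.Theory Num.Theory.
Import numFieldNormedType.Exports.
Local Open Scope ring_scope.
Set Implicit Arguments. Unset Strict Implicit.
Local Open Scope classical_set_scope.

(* Set N := N' o phi.  Since phi maps each m_i onto m'_i, it intertwines the
   two dilation groups, so N is a quasi-norm for delta.  Because phi - id
   raises the filtration, the conjugate delta'_s o phi o delta'_(1/s) is the
   identity up to O(s) for s <= 1.  Rescaling x by s = 1/N(x) therefore puts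
   delta'_s x within O(s) of delta'_s (phi x), a point of the bounded set
   {N' = 1}; uniform continuity of N' there gives N'(x)/N(x) -> 1.  Finally
   two homogeneous quasi-norms that are both asymptotic to N' have a ratio
   that is constant along each dilation orbit and tends to 1, hence is 1. *)

Section LinearEndomorphism.
Variables (R : realType) (n : nat) (f : 'rV[R]_n -> 'rV[R]_n).
Hypothesis f_lin : linear f.

Let fL : {linear 'rV[R]_n -> 'rV[R]_n} :=
  HB.pack f (GRing.isLinear.Build _ _ _ _ f f_lin).

Lemma lin0 : f 0 = 0. Proof. exact: (linear0 fL). Qed.
Lemma linD x y : f (x + y) = f x + f y. Proof. exact: (linearD fL). Qed.
Lemma linB x y : f (x - y) = f x - f y. Proof. exact: (linearB fL). Qed.
Lemma linZ a x : f (a *: x) = a *: f x. Proof. exact: (linearZZ fL). Qed.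

Lemma normr_coord_le (v : 'rV[R]_n) j : `|v 0 j| <= `|v|.
Proof.
have /mapP[k _ ->] : `|v ord0 j| \in [seq `|v x.1 x.2| | x : 'I_1 * 'I_n].
  by apply/mapP; exists (ord0, j) => //=; rewrite mem_enum.
by rewrite [leRHS]/Num.norm /= mx_normrE; apply/bigmax_geP; right => /=; exists k.
Qed.

Lemma lin_bounded : exists2 C, 0 <= C & forall v, `|f v| <= C * `|v|.
Proof.
exists (\sum_(j < n) `|f (delta_mx 0 j)|) => [|v]; first exact: sumr_ge0.
rewrite {1}[v]row_sum_delta (big_morph f linD lin0).
apply: le_trans (ler_norm_sum _ _ _) _; rewrite mulr_suml.
by apply: ler_sum => j _; rewrite linZ normrZ mulrC ler_wpM2l ?normr_coord_le.
Qed.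

Lemma lin_continuous : continuous f.
Proof.
apply: (@bounded_linear_continuous _ _ _ fL); apply/linear_boundedP.
have [C _ hC] := lin_bounded; exists C; split; first exact: num_real.
by move=> r /ltW Cr x; apply: le_trans (hC x) _; rewrite ler_wpM2r.
Qed.
End LinearEndomorphism.

Lemma nat_down_ind (r : nat) (P : nat -> Prop) :
  P r.+1 -> (forall k, (1 <= k <= r)%N -> P k.+1 -> P k) ->
  forall k, (1 <= k <= r.+1)%N -> P k.
Proof.
move=> Ptop Pstep k /andP[k1 kr]; rewrite -(subKn kr).
have : (r.+1 - k <= r)%N by lia.
elim: (r.+1 - k)%N => [|d IHd] dr; first by rewrite subn0.
have -> : (r.+1 - d.+1 = r - d)%N by lia.
apply: Pstep; first lia.
have -> : ((r - d).+1 = r.+1 - d)%N by lia.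
by apply: IHd; lia.
Qed.

Section Filtration.
Variables (R : realType) (n r : nat) (F m : nat -> {vspace 'rV[R]_n}).
Hypothesis HF : adapted_decomp r F m.

Lemma filtrationS k : (1 <= k <= r)%N -> (F k.+1 <= F k)%VS.
Proof. by case: HF => _ _ H /H [<- _]; exact: addvSr. Qed.

Lemma graded_sub_filtration k : (1 <= k <= r)%N -> (m k <= F k)%VS.
Proof. by case: HF => _ _ H /H [<- _]; exact: addvSl. Qed.

Lemma mem_filtration1 x : x \in F 1%N.
Proof. by case: HF => -> _ _; exact: memvf. Qed.

Lemma mem_filtration_end x : x \in F r.+1 -> x = 0.
Proof. by case: HF => _ -> _; rewrite memv0 => /eqP. Qed.

Lemma filtration_split k x : (1 <= k <= r)%N -> x \in F k ->
  exists2 a, a \in m k & x - a \in F k.+1.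
Proof.
case: HF => _ _ H /H [<- _] /memv_addP [a ha [b hb ->]].
by exists a => //; rewrite addrC addKr.
Qed.

Lemma filtration_ind (P : nat -> 'rV[R]_n -> Prop) :
  P r.+1 0 ->
  (forall k a b, (1 <= k <= r)%N -> a \in m k -> b \in F k.+1 ->
     P k.+1 b -> P k (a + b)) ->
  forall k x, (1 <= k <= r.+1)%N -> x \in F k -> P k x.
Proof.
move=> P0 Pstep k x hk; move: k hk x; apply: nat_down_ind.
  by move=> x /mem_filtration_end ->.
move=> k hk IH x /(filtration_split hk) [a ha hb].
by rewrite -(subrKC a x); apply: Pstep => //; apply: IH.
Qed.

Lemma graded_ind (P : 'rV[R]_n -> Prop) :
  P 0 ->
  (forall k a b, (1 <= k <= r)%N -> a \in m k -> b \in F k.+1 -> P b -> P (a + b)) ->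
  forall x, P x.
Proof.
move=> P0 Pstep x.
exact: (@filtration_ind (fun _ => P) P0 _ 1%N x _ (mem_filtration1 x)).
Qed.

Lemma filtration_split_bounded k : (1 <= k <= r)%N -> exists2 P : R, 0 <= P &
  forall u, u \in F k -> exists2 a, a \in m k & u - a \in F k.+1 /\ `|a| <= P * `|u|.
Proof.
move=> hk; case: HF => _ _ /(_ k hk) [msum mcap].
set pi := daddv_pi (m k) (F k.+1).
have [P P0 hP] := lin_bounded (linearP pi).
exists P => // u hu; exists (pi u); first exact: memv_pi.
split; last exact: hP.
have := daddv_pi_add mcap; rewrite msum => /(_ u hu) piu.
by rewrite -{1}piu addrC addKr memv_pi.
Qed.
End Filtration.

Definition raises_filtration (R : realType) (n r : nat)
  (F : nat -> {vspace 'rV[R]_n}) (h : 'rV[R]_n -> 'rV[R]_n) : Prop :=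
  forall k x, (1 <= k <= r)%N -> x \in F k -> h x \in F k.+1.

Section Dilation.
Variables (R : realType) (n r : nat) (F m : nat -> {vspace 'rV[R]_n}).
Variable delta : R -> 'rV[R]_n -> 'rV[R]_n.
Hypothesis HF : adapted_decomp r F m.
Hypothesis Hd : is_dilation r m delta.

Lemma dil_linear t : 0 < t -> linear (delta t).
Proof. by move=> /Hd []. Qed.

Lemma dil_graded t i x : 0 < t -> (1 <= i <= r)%N -> x \in m i ->
  delta t x = t ^+ i *: x.
Proof. by move=> /Hd [] _; apply. Qed.

Lemma dilM a b x : 0 < a -> 0 < b -> delta a (delta b x) = delta (a * b) x.
Proof.
move=> a0 b0; have ab0 : 0 < a * b by rewrite mulr_gt0.
have La := dil_linear a0; have Lb := dil_linear b0; have Lab := dil_linear ab0.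
elim/(graded_ind HF): x => [|k u v hk hu hv IH]; first by rewrite !lin0.
rewrite (linD Lb) (linD La) (linD Lab) IH !(dil_graded _ hk hu) //.
by rewrite (linZ La) (dil_graded a0 hk hu) scalerA -exprMn mulrC.
Qed.

Lemma dil1 x : delta 1 x = x.
Proof.
have L1 := dil_linear ltr01.
elim/(graded_ind HF): x => [|k u v hk hu hv IH]; first by rewrite lin0.
by rewrite (linD L1) IH (dil_graded ltr01 hk hu) expr1n scale1r.
Qed.

Lemma dilK t : 0 < t -> cancel (delta t) (delta t^-1).
Proof. by move=> t0 x; rewrite dilM ?invr_gt0 // mulVf ?gt_eqF // dil1. Qed.

Lemma dil_norm_small k : (1 <= k <= r.+1)%N -> exists2 C : R, 0 <= C &
  forall u s, u \in F k -> 0 < s -> s <= 1 -> `|delta s u| <= s ^+ k * C * `|u|.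
Proof.
move: k; apply: nat_down_ind.
  exists 0 => // u s /(mem_filtration_end HF) -> s0 _.
  by rewrite (lin0 (dil_linear s0)) normr0 mulr0.
move=> k hk [C C0 hC].
have [P P0 hP] := filtration_split_bounded HF hk.
exists (P + C * (1 + P)) => [|u s hu s0 s1]; first by rewrite addr_ge0 ?mulr_ge0 ?addr_ge0.
have [a ha [hb aP]] := hP u hu.
have bu : `|u - a| <= (1 + P) * `|u|.
  by rewrite mulrDl mul1r; apply: le_trans (ler_normB _ _) _; rewrite lerD2l.
have sk0 : 0 <= s ^+ k by rewrite exprn_ge0 // ltW.
rewrite -{1}(subrKC a u) (linD (dil_linear s0)) (dil_graded s0 hk ha).
apply: le_trans (ler_normD _ _) _; rewrite normrZ ger0_norm //.
have -> : s ^+ k * (P + C * (1 + P)) * `|u| =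
  s ^+ k * (P * `|u|) + s ^+ k * C * ((1 + P) * `|u|) by ring.
apply: lerD; first exact: ler_wpM2l.
apply: le_trans (hC _ _ hb s0 s1) _.
apply: le_trans (_ : _ <= s ^+ k * C * `|u - a|) _; last by rewrite ler_wpM2l ?mulr_ge0.
by rewrite exprS -!mulrA ler_piMl ?mulr_ge0.
Qed.

Lemma dil_conj_raising (h : 'rV[R]_n -> 'rV[R]_n) k :
  linear h -> raises_filtration r F h -> (1 <= k <= r.+1)%N ->
  exists2 D : R, 0 <= D & forall u s, u \in F k -> 0 < s -> s <= 1 ->
    `|delta s (h (delta s^-1 u))| <= s * D * `|u|.
Proof.
move=> h_lin h_raise; have [H H0 hH] := lin_bounded h_lin.
move: k; apply: nat_down_ind.
  exists 0 => // u s /(mem_filtration_end HF) -> s0 _.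
  have si0 : 0 < s^-1 by rewrite invr_gt0.
  by rewrite (lin0 (dil_linear si0)) (lin0 h_lin) (lin0 (dil_linear s0)) normr0 mulr0.
move=> k hk [D D0 hD].
have [P P0 hP] := filtration_split_bounded HF hk.
have hk1 : (1 <= k.+1 <= r.+1)%N by lia.
have [C C0 hC] := dil_norm_small hk1.
exists (C * H * P + D * (1 + P)) => [|u s hu s0 s1].
  by rewrite addr_ge0 ?mulr_ge0 ?addr_ge0.
have si0 : 0 < s^-1 by rewrite invr_gt0.
have [a ha [hb aP]] := hP u hu.
have bu : `|u - a| <= (1 + P) * `|u|.
  by rewrite mulrDl mul1r; apply: le_trans (ler_normB _ _) _; rewrite lerD2l.
have ha' : h a \in F k.+1 by apply: h_raise => //; apply: (subvP (graded_sub_filtration HF hk)).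
have Ls := dil_linear s0; have Lsi := dil_linear si0.
(* On m_k the conjugation scales by s^-k, while h a lies in F_(k+1), where
   delta s contracts by s^(k+1): one factor s survives. *)
rewrite -{1}(subrKC a u) (linD Lsi) (dil_graded si0 hk ha) (linD h_lin) (linZ h_lin).
rewrite (linD Ls) (linZ Ls).
apply: le_trans (ler_normD _ _) _; rewrite normrZ ger0_norm; last by rewrite exprn_ge0 // ltW.
have -> : s * (C * H * P + D * (1 + P)) * `|u| =
  s * C * (H * (P * `|u|)) + s * D * ((1 + P) * `|u|) by ring.
apply: lerD; last by apply: le_trans (hD _ _ hb s0 s1) _; rewrite ler_wpM2l // mulr_ge0 // ltW.
apply: le_trans (ler_wpM2l _ (hC _ _ ha' s0 s1)) _; first by rewrite exprn_ge0 // invr_ge0 ltW.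
have sk : s^-1 ^+ k * s ^+ k.+1 = s.
  by rewrite exprVn exprS mulrCA mulVf ?mulr1 // expf_neq0 // gt_eqF.
rewrite !mulrA sk -!mulrA; apply: ler_wpM2l; first exact: ltW.
by apply: ler_wpM2l => //; apply: le_trans (hH _) _; rewrite ler_wpM2l.
Qed.
End Dilation.

Section Unipotent.
Variables (R : realType) (n r : nat) (F m : nat -> {vspace 'rV[R]_n}).
Variable g : 'rV[R]_n -> 'rV[R]_n.
Hypothesis HF : adapted_decomp r F m.
Hypothesis g_lin : linear g.

Lemma graded_unipotent :
  (forall i x, (1 <= i <= r)%N -> x \in m i -> g x - x \in F i.+1) ->
  raises_filtration r F (fun x => g x - x).
Proof.
move=> g_m k x hk; apply: (filtration_ind HF (P := fun k x => g x - x \in F k.+1));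
  [by rewrite lin0 // subr0 mem0v | | lia].
move=> {}k a b {}hk ha hb IH; rewrite linD // opprD addrACA rpredD //; first exact: g_m.
have [kr|kr] := ltnP k r.
  have FS : (F k.+2 <= F k.+1)%VS by apply: (filtrationS HF); lia.
  exact: (subvP FS).
have -> : b = 0 by apply: (mem_filtration_end HF); have <- : k = r by lia.
by rewrite lin0 // subr0 mem0v.
Qed.

Lemma unipotent_inj : raises_filtration r F (fun x => g x - x) -> injective g.
Proof.
move=> g_unip x y gxy; apply/eqP; rewrite -subr_eq0; apply/eqP.
have gz : g (x - y) = 0 by rewrite linB // gxy subrr.
suff zF : forall k, (k <= r)%N -> x - y \in F k.+1 by apply: (mem_filtration_end HF); exact: zF.
elim=> [|k IH] kr; first exact: (mem_filtration1 HF).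
have kr' : (k <= r)%N by lia.
by have := g_unip k.+1 (x - y) _ (IH kr'); rewrite gz sub0r memvN; apply; lia.
Qed.
End Unipotent.

Lemma graded_map_dilC (R : realType) (n r : nat) (F m m' : nat -> {vspace 'rV[R]_n})
  (delta delta' : R -> 'rV[R]_n -> 'rV[R]_n) (phi : 'rV[R]_n -> 'rV[R]_n) :
  adapted_decomp r F m -> is_dilation r m delta -> is_dilation r m' delta' ->
  linear phi -> (forall i x, (1 <= i <= r)%N -> x \in m i -> phi x \in m' i) ->
  forall t x, 0 < t -> phi (delta t x) = delta' t (phi x).
Proof.
move=> HF Hd Hd' phi_lin phi_m t x t0.
have L := dil_linear Hd t0; have L' := dil_linear Hd' t0.
elim/(graded_ind HF): x => [|k a b hk ha hb IH]; first by rewrite !lin0.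
rewrite (linD L) !(linD phi_lin) (linD L') IH (dil_graded Hd t0 hk ha).
by rewrite (dil_graded Hd' t0 hk (phi_m _ _ hk ha)) (linZ phi_lin).
Qed.

Section CompactUniform.
Variables (R : realType) (n : nat).

Lemma compact_norm_le (B : R) : compact [set u : 'rV[R]_n | `|u| <= B].
Proof.
apply: bounded_closed_compact.
  by exists B; split; [exact: num_real | move=> M BM z /= /le_trans; apply; exact: ltW].
rewrite -[X in closed X]/(Num.norm @^-1` [set x : R | x <= B]).
by apply: preimage_closed => [? _|]; [exact: norm_continuous | exact: closed_le].
Qed.

Lemma continuous_compact_unif (f : 'rV[R]_n -> R) (K : set 'rV[R]_n) :
  compact K -> continuous f -> forall e, 0 < e -> exists2 d, 0 < d &
    forall u w, K u -> `|w - u| < d -> `|f w - f u| < e.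
Proof.
move=> cK cf e e0; have /compact_near_coveringP := cK.
move=> /(_ nat eventually (fun i u => forall w, `|w - u| < i.+1%:R^-1 -> `|f w - f u| < e)).
case=> [x Kx|N _ hN]; last first.
  exists N.+1%:R^-1 => [|u w Ku]; first by rewrite invr_gt0 ltr0Sn.
  exact: hN N (leqnn N) u Ku w.
have e20 : 0 < e / 2 by rewrite divr_gt0.
have /(cvgrPdist_lt (FF := nbhs_filter x)) /(_ _ e20) /nbhs_ballP [rho rho0 hrho] := cf x.
have rho20 : 0 < rho / 2 by rewrite divr_gt0.
exists (ball x (rho / 2), fun i : nat => (i.+1%:R^-1 < rho / 2 : Prop)) => /=.
  by split; [exact: nbhsx_ballx | exact: (near_infty_natSinv_lt (PosNum rho20))].
case=> x' i /= [xx' hi] w hw; rewrite -ball_normE /ball_ /= in xx'.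
have fx z : `|x - z| < rho -> `|f x - f z| < e / 2.
  by move=> xz; apply: hrho; rewrite -ball_normE.
have h1 : `|f x - f x'| < e / 2 by apply: fx; apply: lt_trans xx' _; lra.
have h2 : `|f w - f x| < e / 2.
  rewrite distrC; apply: fx; apply: le_lt_trans (ler_distD x' x w) _.
  by rewrite (distrC x' w); have := lt_trans hw hi; lra.
by apply: le_lt_trans (ler_distD (f x) (f w) (f x')) _; lra.
Qed.
End CompactUniform.

Lemma quasi_norm_gt0 (R : realType) (n : nat) (delta : R -> 'rV[R]_n -> 'rV[R]_n)
  (N : 'rV[R]_n -> R) x : quasi_norm delta N -> x != 0 -> 0 < N x.
Proof. by case=> _ N0 Neq0 _ x0; rewrite lt_def N0 andbT; apply: contra x0 => /eqP /Neq0 ->. Qed.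

Section QuasiNorm.
Variables (R : realType) (n r : nat) (F m : nat -> {vspace 'rV[R]_n}).
Variables (delta : R -> 'rV[R]_n -> 'rV[R]_n) (N : 'rV[R]_n -> R).
Hypothesis HF : adapted_decomp r F m.
Hypothesis Hd : is_dilation r m delta.
Hypothesis HN : quasi_norm delta N.

Lemma quasi_norm_annulus_min (l : R) : 0 < l -> exists2 c, 0 < c &
  forall z, l <= `|z| -> `|z| <= 1 -> c <= N z.
Proof.
move=> l0; case: (HN) => Nc _ _ _.
set A := [set z : 'rV[R]_n | `|z| <= 1] `&` [set z | l <= `|z|].
have cA : compact A.
  apply: compact_closedI; first exact: compact_norm_le.
  rewrite -[X in closed X]/(Num.norm @^-1` [set x : R | l <= x]).
  by apply: preimage_closed => [? _|]; [exact: norm_continuous | exact: closed_ge].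
have [[z0 Az0]|A0] := pselect (A !=set0); last first.
  by exists 1 => // z lz z1; exfalso; apply: A0; exists z.
have [c Ac cmin] := EVT_min_rV (ex_intro _ z0 Az0) cA (continuous_subspaceT Nc).
exists (N c) => [|z lz z1]; last by apply: cmin; apply/mem_set.
apply: (quasi_norm_gt0 HN); apply: contraTneq Ac => ->.
by apply/negP => /set_mem -[_] /=; rewrite normr0 leNgt l0.
Qed.

Lemma quasi_norm_ge_out_ball : exists2 c, 0 < c & forall u, 1 < `|u| -> c <= N u.
Proof.
case: (HN) => _ N0 _ Nhom.
have [C C0 hC] := dil_norm_small HF Hd (isT : (1 <= 1 <= r.+1)%N).
set sg := (2 * C + 2)^-1.
have sg0 : 0 < sg by rewrite invr_gt0; lra.
have sg1 : sg <= 1 by rewrite invf_le1; lra.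
have shrink z : `|delta sg z| <= `|z| / 2.
  apply: le_trans (hC _ _ (mem_filtration1 HF z) sg0 sg1) _.
  rewrite expr1 mulrC ler_wpM2l // ler_pdivrMl; last lra.
  by rewrite ler_pdivlMr; lra.
have sgV0 : 0 < sg^-1 by rewrite invr_gt0.
have [L L0 hL] := lin_bounded (dil_linear Hd sgV0).
set l := (L + 1)^-1.
have l0 : 0 < l by rewrite invr_gt0; lra.
have grow z : l * `|z| <= `|delta sg z|.
  rewrite mulrC ler_pdivrMr; last lra.
  have := hL (delta sg z); rewrite (dilK HF Hd) // => /le_trans; apply.
  by rewrite mulrC ler_wpM2l ?lerDl.
have [c c0 hc] := quasi_norm_annulus_min l0.
(* Each application of delta sg at least halves the norm but shrinks it by no
   more than the factor l, so iterating it from |u| > 1 lands in the annulus. *)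
exists c => // u u1.
have [k uk] : exists k, `|u| <= 2 ^+ k.
  exists (Num.truncn `|u|).+1; apply: ltW; apply: lt_le_trans (truncnS_gt _) _.
  by rewrite -natrX ler_nat ltnW // ltn_expl.
elim: k u u1 uk => [|k IH] u u1 uk; first by move: uk; rewrite expr0; lra.
have Nsg : N (delta sg u) <= N u by rewrite Nhom // ler_piMl.
apply: le_trans Nsg; have [w1|w1] := lerP `|delta sg u| 1.
  by apply: hc w1; apply: le_trans (grow u); rewrite ler_peMr // ltW.
by apply: IH w1 _; apply: le_trans (shrink u) _; move: uk; rewrite exprS; lra.
Qed.

Lemma quasi_norm_sublevel_bounded : exists2 B, 0 <= B & forall u, N u <= 1 -> `|u| <= B.
Proof.
case: (HN) => _ _ _ Nhom.
have [c c0 hc] := quasi_norm_ge_out_ball.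
have s0 : 0 < c / 2 by rewrite divr_gt0.
have sV0 : 0 < (c / 2)^-1 by rewrite invr_gt0.
have [L L0 hL] := lin_bounded (dil_linear Hd sV0).
exists L => // u Nu.
have small : `|delta (c / 2) u| <= 1.
  rewrite leNgt; apply/negP => /hc; rewrite Nhom //.
  have : c / 2 * N u <= c / 2 by apply: ler_piMr => //; exact: ltW.
  lra.
have := hL (delta (c / 2) u); rewrite (dilK HF Hd) // => /le_trans; apply.
by rewrite -[leRHS]mulr1 ler_wpM2l.
Qed.

Lemma quasi_norm_unipotent_little_o (g : 'rV[R]_n -> 'rV[R]_n) :
  linear g -> raises_filtration r F (fun x => g x - x) ->
  little_o_at_infty (fun x => N (g x)) N.
Proof.
move=> g_lin g_unip eps eps0; case: (HN) => Nc N0 _ Nhom.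
have [B B0 hB] := quasi_norm_sublevel_bounded.
have [d d0 hd] := continuous_compact_unif (@compact_norm_le _ n B) Nc eps0.
have h_lin : linear (fun x => g x - x).
  by move=> a x y; rewrite (linD g_lin) (linZ g_lin) scalerBr opprD addrACA.
have [D D0 hD] := dil_conj_raising HF Hd h_lin g_unip (isT : (1 <= 1 <= r.+1)%N).
exists (1 + 2 * D * (1 + B / d)) => x ltMt; set t := N (g x) in ltMt *.
have BDd0 : 0 <= 2 * D * (B / d).
  apply: mulr_ge0; [exact: mulr_ge0 | exact: divr_ge0 B0 (ltW d0)].
have t0 : 0 < t by move: ltMt; rewrite mulrDr mulr1; lra.
have s0 : 0 < t^-1 by rewrite invr_gt0.
set u := delta t^-1 (g x); set w := delta t^-1 x.
have Nu : N u = 1 by rewrite /u Nhom // mulVf ?gt_eqF.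
have uB : `|u| <= B by apply: hB; rewrite Nu.
have uw : u - w = delta t^-1 (g (delta t^-1^-1 w) - delta t^-1^-1 w).
  by rewrite /w (dilK HF Hd) // (linB (dil_linear Hd s0)).
have huw : `|u - w| <= t^-1 * D * `|w|.
  rewrite uw; apply: hD => //; first exact: (mem_filtration1 HF).
  by rewrite invf_le1 //; move: ltMt; rewrite mulrDr mulr1; lra.
have wd : `|w - u| < d.
  rewrite mulrDr mulr1 in ltMt.
  have sD : t^-1 * D <= 2^-1 by rewrite mulrC ler_pdivrMr //; lra.
  have sD0 : 0 <= t^-1 * D by rewrite mulr_ge0 // ltW.
  have wuw : `|w| <= `|u| + `|u - w| by rewrite -[w in leLHS](subKr u) ler_normB.
  have DBt : 2 * D * B < d * t.
    have -> : 2 * D * B = d * (2 * D * (B / d)) by field; rewrite gt_eqF.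
    by rewrite ltr_pM2l //; lra.
  rewrite distrC; apply: le_lt_trans (_ : _ <= 2 * D * B / t) _; last by rewrite ltr_pdivrMr.
  have -> : 2 * D * B / t = 2 * (t^-1 * D) * B by ring.
  have qX : t^-1 * D * `|w| <= t^-1 * D * B + t^-1 * D * `|u - w|.
    by rewrite -mulrDr ler_wpM2l // (le_trans wuw) // lerD2r.
  have qY : t^-1 * D * `|u - w| <= 2^-1 * `|u - w| by rewrite ler_wpM2r.
  lra.
have := hd u w uB wd; rewrite Nu /w Nhom // => hlt.
have -> : t - N x = - (t * (t^-1 * N x - 1)) by rewrite mulrBr mulrA mulfV ?gt_eqF // mul1r mulr1 opprB.
by rewrite normrN normrM (gtr0_norm t0) mulrC ler_wpM2r ?(ltW t0) ?(ltW hlt).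
Qed.
End QuasiNorm.

Lemma quasi_norm_comp (R : realType) (n : nat) (delta delta' : R -> 'rV[R]_n -> 'rV[R]_n)
  (N' : 'rV[R]_n -> R) (phi : 'rV[R]_n -> 'rV[R]_n) :
  quasi_norm delta' N' -> linear phi -> injective phi ->
  (forall t x, 0 < t -> phi (delta t x) = delta' t (phi x)) ->
  quasi_norm delta (fun x => N' (phi x)).
Proof.
case=> N'c N'0 N'eq0 N'hom phi_lin phi_inj phiC; split => // [x|x|t x t0].
- by apply: continuous_comp; [exact: lin_continuous | exact: N'c].
- split => [/N'eq0|->]; last by apply/N'eq0; exact: lin0.
  by rewrite -{1}(lin0 phi_lin) => /phi_inj.
- by rewrite phiC // N'hom.
Qed.

Lemma little_o_quasi_norm_unique (R : realType) (n : nat)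
  (delta : R -> 'rV[R]_n -> 'rV[R]_n) (N1 N2 N' : 'rV[R]_n -> R) :
  quasi_norm delta N1 -> quasi_norm delta N2 ->
  little_o_at_infty N1 N' -> little_o_at_infty N2 N' -> N1 = N2.
Proof.
move=> qN1 qN2 o1 o2; apply: funext => x.
case: (qN1) => _ _ N1eq0 N1hom; case: (qN2) => _ _ N2eq0 N2hom.
have [->|x0] := eqVneq x 0; first by rewrite (N1eq0 0).2 // (N2eq0 0).2.
have a0 := quasi_norm_gt0 qN1 x0; have b0 := quasi_norm_gt0 qN2 x0.
set a := N1 x in a0 *; set b := N2 x in b0 *.
suff close e : 0 < e -> `|a - b| <= e * (a + b).
  apply/eqP; rewrite -subr_eq0 -normr_le0; apply/ler_addgt0Pr => e e0.
  have ab0 : 0 < a + b by rewrite addr_gt0.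
  by rewrite add0r -[leRHS](divfK (lt0r_neq0 ab0)) close // divr_gt0.
move=> e0; have [M1 h1] := o1 e e0; have [M2 h2] := o2 e e0.
set t := Num.max ((`|M1| + 1) / a) ((`|M2| + 1) / b).
have ta : (`|M1| + 1) / a <= t by rewrite le_max lexx.
have tb : (`|M2| + 1) / b <= t by rewrite le_max lexx orbT.
have t0 : 0 < t by apply: lt_le_trans ta; rewrite divr_gt0 // ltr_wpDl.
have := h1 (delta t x); have := h2 (delta t x); rewrite N1hom // N2hom //.
move: ta tb; rewrite !ler_pdivrMr // => ta tb.
have M1a : M1 < t * a by apply: lt_le_trans ta; have := ler_norm M1; lra.
have M2b : M2 < t * b by apply: lt_le_trans tb; have := ler_norm M2; lra.
move=> /(_ M2b) hb /(_ M1a) ha.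
rewrite -(ler_pM2l t0) -(gtr0_norm t0) -normrM mulrBr (gtr0_norm t0).
apply: le_trans (ler_distD (N' (delta t x)) _ _) _; rewrite (distrC (N' _)).
have -> : t * (e * (a + b)) = e * (t * a) + e * (t * b) by ring.
exact: lerD.
Qed.

Theorem proposition2p6 (R : realType) (n r : nat)
  (F m m' : nat -> {vspace 'rV[R]_n})
  (delta delta' : R -> 'rV[R]_n -> 'rV[R]_n)
  (phi : 'rV[R]_n -> 'rV[R]_n) (N' : 'rV[R]_n -> R) :
  adapted_decomp r F m ->
  adapted_decomp r F m' ->
  is_dilation r m delta ->
  is_dilation r m' delta' ->
  (forall (a : R) x y, phi (a *: x + y) = a *: phi x + phi y) ->
  (forall i x, (1 <= i <= r)%N -> x \in m i ->
     phi x \in m' i /\ phi x - x \in F i.+1) ->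
  quasi_norm delta' N' ->
  exists N : 'rV[R]_n -> R,
    [/\ quasi_norm delta N,
        little_o_at_infty N N',
        (forall x, N x = N' (phi x)) &
        (forall N2, quasi_norm delta N2 -> little_o_at_infty N2 N' -> N2 = N)].
Proof.
move=> HF HF' Hd Hd' phi_lin phi_m HN'.
have phi_unip : raises_filtration r F (fun x => phi x - x).
  by apply: (graded_unipotent HF phi_lin) => i x hi /(phi_m _ _ hi) [].
have qN : quasi_norm delta (fun x => N' (phi x)).
  apply: (quasi_norm_comp HN' phi_lin (unipotent_inj HF phi_lin phi_unip)).
  by apply: (graded_map_dilC HF Hd Hd' phi_lin) => i x hi /(phi_m _ _ hi) [].
have oN := quasi_norm_unipotent_little_o HF' Hd' HN' phi_lin phi_unip.
exists (fun x => N' (phi x)); split => // N2 qN2 oN2.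
exact: little_o_quasi_norm_unique qN2 qN oN2 oN.
Qed.
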